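(* For the RCP model with queue feedback (parameters $C,a,b,\tau_1,\tau_2>0$, bifurcation parameter $\kappa$), the criticality of the Hopf bifurcation at $\kappa=\kappa_c$ (i.e. the sign of $\mu_2$) does not depend on the protocol parameter $a$, and there exist parameter values $b>0$, $\tau_1,\tau_2>0$ for which this Hopf bifurcation is sub-critical ($\mu_2<0$), in contrast with the model without queue feedback, for which it is always super-critical.
   Context: RCP model with queue feedback: $$\frac{d}{dt}R(t)=\kappa\,\frac{2aR(t)}{C(\tau_1+\tau_2)}\Big(C-y(t)-bC\,p\big(y(t)\big)\Big),\quad y(t)=R(t-\tau_1)+R(t-\tau_2),\quad p(y)=\frac{y}{2(C-y)},$$ with equilibrium $R^*=\frac{C(4+b-\sqrt{b^2+8b})}{8}$, linearization coefficient $\tilde a=\frac{a}{\tau_1+\tau_2}[1+2R^*/C]$, and critical value $\kappa_c=\dfrac{\pi}{2\tilde a(\tau_1+\tau_2)\cos\!\left(\frac{\pi(\tau_1-\tau_2)}{2(\tau_1+\tau_2)}\right)}$ at which the equilibrium loses stability via a Hopf bifurcation. $\mu_2=-\operatorname{Re}c_1(0)/\alpha'(0)$, where $c_1(0)$ is the first Lyapunov coefficient of the Hopf normal form at $\kappa_c$ and $\alpha'(0)=\operatorname{Re}(d\lambda/d\kappa)|_{\kappa_c}>0$; the bifurcation is super-critical if $\mu_2>0$ and sub-critical if $\mu_2<0$. The model without queue feedback is $\frac{d}{dt}R(t)=\kappa\,\frac{2aR(t)}{\gamma C(\tau_1+\tau_2)}(\gamma C-y(t))$, $\gamma\in(0,1]$.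 *)

From Stdlib Require Import Reals.
Open Scope R_scope.

Definition Cx : Type := (R * R)%type.
Definition cre (z : Cx) : R := fst z.
Definition cim (z : Cx) : R := snd z.
Definition cR (x : R) : Cx := (x, 0).
Definition cadd (z w : Cx) : Cx := (fst z + fst w, snd z + snd w).
Definition cmul (z w : Cx) : Cx :=
  (fst z * fst w - snd z * snd w, fst z * snd w + snd z * fst w).
Definition cscal (r : R) (z : Cx) : Cx := (r * fst z, r * snd z).
Definition cconj (z : Cx) : Cx := (fst z, - snd z).
Definition cinv (z : Cx) : Cx :=
  let n := fst z * fst z + snd z * snd z in (fst z / n, - snd z / n).
Definition cdiv (z w : Cx) : Cx := cmul z (cinv w).
Definition cexp (z : Cx) : Cx := (exp (fst z) * cos (snd z), exp (fst z) * sin (snd z)).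

(** We consider scalar delay equations (in the deviation u = R - R^* from an
    equilibrium)
        u'(t) = f(u(t), u(t-tau1) + u(t-tau2)),     f(0,0) = 0,
    where f is smooth.  A vector field of this type is described (up to order
    three, which is all that matters for the first Lyapunov coefficient) by its
    Taylor coefficients at the origin:  tXY = d^(X+Y) f / dx0^X ds^Y (0,0). *)
Record taylor3 : Type := Taylor3 {
  t10 : R; t01 : R;
  t20 : R; t11 : R; t02 : R;
  t30 : R; t21 : R; t12 : R; t03 : R }.

Definition tscale (k : R) (f : taylor3) : taylor3 :=
  Taylor3 (k * t10 f) (k * t01 f) (k * t20 f) (k * t11 f) (k * t02 f)
          (k * t30 f) (k * t21 f) (k * t12 f) (k * t03 f).

Section HopfDDE.
Variables (f : taylor3) (tau1 tau2 omega : R).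

Definition esum (lam : Cx) : Cx :=
  cadd (cexp (cscal (- tau1) lam)) (cexp (cscal (- tau2) lam)).

Definition charf (lam : Cx) : Cx :=
  cadd lam (cscal (-1) (cadd (cR (t10 f)) (cscal (t01 f) (esum lam)))).

Definition charf' (lam : Cx) : Cx :=
  cadd (cR 1) (cscal (t01 f)
     (cadd (cscal tau1 (cexp (cscal (- tau1) lam)))
           (cscal tau2 (cexp (cscal (- tau2) lam))))).

(** A (complexified) "history" is evaluated only through x0 = phi(0) and
    xs = phi(-tau1) + phi(-tau2); we represent it by this pair. *)
Definition Bform (x y : Cx * Cx) : Cx :=
  cadd (cscal (t20 f) (cmul (fst x) (fst y)))
  (cadd (cscal (t11 f) (cadd (cmul (fst x) (snd y)) (cmul (snd x) (fst y))))
        (cscal (t02 f) (cmul (snd x) (snd y)))).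

Definition Cform (x y z : Cx * Cx) : Cx :=
  let '(x0, xs) := x in let '(y0, ys) := y in let '(z0, zs) := z in
  cadd (cscal (t30 f) (cmul x0 (cmul y0 z0)))
  (cadd (cscal (t21 f) (cadd (cmul x0 (cmul y0 zs))
                        (cadd (cmul x0 (cmul ys z0)) (cmul xs (cmul y0 z0)))))
  (cadd (cscal (t12 f) (cadd (cmul x0 (cmul ys zs))
                        (cadd (cmul xs (cmul y0 zs)) (cmul xs (cmul ys z0)))))
        (cscal (t03 f) (cmul xs (cmul ys zs))))).

Definition iw : Cx := (0, omega).

(** critical eigenfunction q(theta) = e^{i omega theta} and its conjugate *)
Definition qv : Cx * Cx := (cR 1, esum iw).
Definition qvb : Cx * Cx := (cR 1, esum (cconj iw)).

(** second-order center-manifold terms (their components outside the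
    critical eigenspace):  h20(theta) = e^{2 i omega theta} B(q,q)/Delta(2 i omega),
    h11(theta) = B(q,qbar)/Delta(0). *)
Definition E20 : Cx := cdiv (Bform qv qv) (charf (cscal 2 iw)).
Definition h20 : Cx * Cx := (E20, cmul E20 (esum (cscal 2 iw))).
Definition E11 : Cx := cdiv (Bform qv qvb) (charf (cR 0)).
Definition h11 : Cx * Cx := (E11, cscal 2 E11).

(** first Lyapunov coefficient c1(0) of the Hopf normal form
      z' = i omega z + c1 z |z|^2 + ...
    (Hassard--Kazarinoff--Wan; the i/(2 omega)(...) part of their formula
    cancels exactly against the critical-eigenspace components of w20, w11):
      c1 = 1/(2 Delta'(i omega)) [ C(q,q,qbar) + B(qbar,h20) + 2 B(q,h11) ]. *)
Definition lyap1 : Cx :=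
  cscal (1/2) (cdiv (cadd (Cform qv qv qvb)
                     (cadd (Bform qvb h20) (cscal 2 (Bform qv h11))))
                    (charf' iw)).
End HopfDDE.

(** For a family u' = kappa * g(...), the transversality coefficient
    alpha'(0) = Re (d lambda / d kappa) at (kappa, lambda) = (kc, i omega),
    obtained by implicit differentiation of Delta_kappa(lambda) = 0:
      d lambda/d kappa = - (d Delta/d kappa) / (d Delta/d lambda). *)
Definition alpha' (g : taylor3) (kc tau1 tau2 omega : R) : R :=
  cre (cdiv (cadd (cR (t10 g)) (cscal (t01 g) (esum tau1 tau2 (iw omega))))
            (charf' (tscale kc g) tau1 tau2 (iw omega))).

Definition mu2 (g : taylor3) (kc tau1 tau2 omega : R) : R :=
  - cre (lyap1 (tscale kc g) tau1 tau2 omega) / alpha' g kc tau1 tau2 omega.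

(** critical value kappa_c for linearization u' = -kappa at (u(t-tau1)+u(t-tau2)),
    and the corresponding Hopf frequency omega = pi/(tau1+tau2). *)
Definition kappa_c (at_ tau1 tau2 : R) : R :=
  PI / (2 * at_ * (tau1 + tau2) * cos (PI * (tau1 - tau2) / (2 * (tau1 + tau2)))).
Definition omega_c (tau1 tau2 : R) : R := PI / (tau1 + tau2).

(** Vector field of the form g(x0,s) = K (Rs + x0) H(s) with H(s) = h(ystar + s),
    given K, Rs = equilibrium, and h, h', h'', h''' at ystar = 2 Rs. *)
Definition rcp_taylor (K Rs hy0 hy1 hy2 hy3 : R) : taylor3 :=
  Taylor3 (K * hy0) (K * Rs * hy1)
          0 (K * hy1) (K * Rs * hy2)
          0 0 (K * hy2) (K * Rs * hy3).

Definition p_queue (C y : R) : R := y / (2 * (C - y)).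
(* derivatives of p: p' = C/(2(C-y)^2), p'' = C/(C-y)^3, p''' = 3C/(C-y)^4 *)
Definition Rstar_q (C b : R) : R := C * (4 + b - sqrt (b ^ 2 + 8 * b)) / 8.
Definition atilde_q (C a b tau1 tau2 : R) : R :=
  a / (tau1 + tau2) * (1 + 2 * Rstar_q C b / C).
Definition g_queue (C a b tau1 tau2 : R) : taylor3 :=
  let Rs := Rstar_q C b in
  let y := 2 * Rs in
  rcp_taylor (2 * a / (C * (tau1 + tau2))) Rs
    (C - y - b * C * p_queue C y)
    (-1 - b * C * (C / (2 * (C - y) ^ 2)))
    (- b * C * (C / (C - y) ^ 3))
    (- b * C * (3 * C / (C - y) ^ 4)).
Definition mu2_queue (C a b tau1 tau2 : R) : R :=
  mu2 (g_queue C a b tau1 tau2) (kappa_c (atilde_q C a b tau1 tau2) tau1 tau2)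
      tau1 tau2 (omega_c tau1 tau2).

(** * RCP model without queue feedback:
      R' = kappa 2a R/(gamma C (tau1+tau2)) (gamma C - y), equilibrium Rstar = gamma C/2,
      linearization coefficient atilde = a/(tau1+tau2). *)
Definition Rstar_nq (C gamma : R) : R := gamma * C / 2.
Definition atilde_nq (a tau1 tau2 : R) : R := a / (tau1 + tau2).
Definition g_noqueue (C a gamma tau1 tau2 : R) : taylor3 :=
  let Rs := Rstar_nq C gamma in
  rcp_taylor (2 * a / (gamma * C * (tau1 + tau2))) Rs
    (gamma * C - 2 * Rs) (-1) 0 0.
Definition mu2_noqueue (C a gamma tau1 tau2 : R) : R :=
  mu2 (g_noqueue C a gamma tau1 tau2) (kappa_c (atilde_nq a tau1 tau2) tau1 tau2)
      tau1 tau2 (omega_c tau1 tau2).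

(* The critical value kappa_c scales like 1/a and the Taylor coefficients of the
   RCP vector field g like a, so the critical field kappa_c g, and with it c1(0),
   does not depend on a, while alpha'(0) is proportional to a: mu2 = mu2|_(a=1) / a.

   At the Hopf frequency omega = pi/(tau1+tau2), with theta = omega tau1, one has
   e^(-i omega tau1) + e^(-i omega tau2) = -2i sin theta and
   e^(-2i omega tau1) + e^(-2i omega tau2) = 2 cos (2 theta); this turns c1(0)
   into a closed rational expression in sin theta, cos theta, omega and the Taylor
   coefficients.  Without queue feedback only the mixed quadratic coefficient
   survives and mu2 > 0 reduces to the positivity of a trigonometric expression
   on 0 < theta < pi.  With queue feedback the cubic coefficients coming from
   p(y) can win: for b = 1/28 and tau1 = tau2 = 1, Re c1(0) > 0. *)

From Stdlib Require Import Reals Lra Psatz.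
Open Scope R_scope.

Lemma tscale_tscale k k' f : tscale k (tscale k' f) = tscale (k * k') f.
Proof. destruct f; unfold tscale; cbn; f_equal; ring. Qed.

Lemma alpha'_tscale k g kc t1 t2 w :
  alpha' (tscale k g) kc t1 t2 w = k * alpha' g (kc * k) t1 t2 w.
Proof.
  unfold alpha'; rewrite tscale_tscale.
  destruct g; unfold cre, cdiv, cmul, cinv, cadd, cscal, cR, tscale; cbn; ring.
Qed.

Lemma mu2_tscale k g kc t1 t2 w :
  mu2 (tscale k g) kc t1 t2 w = mu2 g (kc * k) t1 t2 w / k.
Proof.
  unfold mu2; rewrite alpha'_tscale, tscale_tscale.
  unfold Rdiv; rewrite Rinv_mult; ring.
Qed.

Lemma kappa_c_scale k at_ t1 t2 : kappa_c (k * at_) t1 t2 = kappa_c at_ t1 t2 / k.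
Proof. unfold kappa_c, Rdiv; rewrite !Rinv_mult; ring. Qed.

Lemma atilde_q_scale C a b t1 t2 : atilde_q C a b t1 t2 = a * atilde_q C 1 b t1 t2.
Proof. unfold atilde_q, Rdiv; ring. Qed.

Lemma g_queue_scale C a b t1 t2 : g_queue C a b t1 t2 = tscale a (g_queue C 1 b t1 t2).
Proof. unfold g_queue, rcp_taylor, tscale; cbn; f_equal; unfold Rdiv; ring. Qed.

Lemma mu2_queue_scale C a b t1 t2 :
  a <> 0 -> mu2_queue C a b t1 t2 = mu2_queue C 1 b t1 t2 / a.
Proof.
  intros Ha; unfold mu2_queue.
  rewrite g_queue_scale, atilde_q_scale, kappa_c_scale, mu2_tscale.
  f_equal; f_equal; field; exact Ha.
Qed.

Lemma Rdiv_pos_sign x a : 0 < a -> (0 < x / a <-> 0 < x) /\ (x / a < 0 <-> x < 0).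
Proof.
  intros Ha; pose proof (Rinv_0_lt_compat a Ha).
  unfold Rdiv; split; split; intros; nra.
Qed.

Lemma esum_cconj t1 t2 z : esum t1 t2 (cconj z) = cconj (esum t1 t2 z).
Proof.
  destruct z as [x y]; unfold esum, cconj, cexp, cadd, cscal; cbn.
  replace (- t1 * - y) with (- (- t1 * y)) by ring.
  replace (- t2 * - y) with (- (- t2 * y)) by ring.
  rewrite !cos_neg, !sin_neg; f_equal; ring.
Qed.

Lemma esum_0 t1 t2 : esum t1 t2 (cR 0) = (2, 0).
Proof.
  unfold esum, cR, cexp, cadd, cscal; cbn.
  rewrite !Rmult_0_r, exp_0, cos_0, sin_0; f_equal; ring.
Qed.

Section HopfFrequency.
Variables t1 t2 : R.
Hypotheses (Ht1 : 0 < t1) (Ht2 : 0 < t2).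
Let th := t1 * omega_c t1 t2.

Lemma omega_c_t2 : t2 * omega_c t1 t2 = PI - th.
Proof. unfold th, omega_c; field; lra. Qed.

Lemma hopf_phase_bounds : 0 < th < PI.
Proof.
  pose proof PI_RGT_0.
  assert (0 < omega_c t1 t2) by (apply Rdiv_lt_0_compat; lra).
  assert (0 < t2 * omega_c t1 t2) by (apply Rmult_lt_0_compat; lra).
  assert (0 < th) by (apply Rmult_lt_0_compat; lra).
  rewrite omega_c_t2 in *; lra.
Qed.

Lemma esum_hopf : esum t1 t2 (iw (omega_c t1 t2)) = (0, -2 * sin th).
Proof.
  unfold esum, iw, cexp, cadd, cscal; cbn.
  rewrite !Rmult_0_r, exp_0.
  replace (- t1 * omega_c t1 t2) with (- th) by (unfold th; ring).
  replace (- t2 * omega_c t1 t2) with (- (PI - th)) by (rewrite <- omega_c_t2; ring).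
  rewrite !cos_neg, !sin_neg, Rtrigo_facts.cos_pi_minus, sin_PI_x; f_equal; ring.
Qed.

Lemma esum_hopf_double :
  esum t1 t2 (cscal 2 (iw (omega_c t1 t2))) = (2 * (cos th ^ 2 - sin th ^ 2), 0).
Proof.
  unfold esum, iw, cexp, cadd, cscal; cbn.
  rewrite !Rmult_0_r, exp_0.
  replace (- t1 * (2 * omega_c t1 t2)) with (- (2 * th)) by (unfold th; ring).
  replace (- t2 * (2 * omega_c t1 t2)) with (2 * th - 2 * PI)
    by (replace (- t2 * (2 * omega_c t1 t2)) with (- 2 * (t2 * omega_c t1 t2)) by ring;
        rewrite omega_c_t2; ring).
  rewrite cos_neg, sin_neg, cos_minus, sin_minus, cos_2PI, sin_2PI, cos_2a, sin_2a.
  f_equal; ring.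
Qed.

Lemma charf'_hopf f :
  charf' f t1 t2 (iw (omega_c t1 t2))
  = (1 + t01 f * (t1 - t2) * cos th, - t01 f * (t1 + t2) * sin th).
Proof.
  unfold charf', iw, cexp, cadd, cscal, cR; cbn.
  rewrite !Rmult_0_r, exp_0.
  replace (- t1 * omega_c t1 t2) with (- th) by (unfold th; ring).
  replace (- t2 * omega_c t1 t2) with (- (PI - th)) by (rewrite <- omega_c_t2; ring).
  rewrite !cos_neg, !sin_neg, Rtrigo_facts.cos_pi_minus, sin_PI_x; f_equal; ring.
Qed.

Lemma cos_kappa_c_phase : cos (PI * (t1 - t2) / (2 * (t1 + t2))) = sin th.
Proof.
  replace (PI * (t1 - t2) / (2 * (t1 + t2))) with (PI / 2 - (PI - th))
    by (unfold th, omega_c; field; lra).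
  rewrite cos_shift, sin_PI_x; reflexivity.
Qed.
End HopfFrequency.

Ltac cx_simpl :=
  unfold cdiv, cinv, Bform, Cform, iw, cre, cim, cadd, cmul, cscal, cR, cconj;
  cbn beta iota zeta delta [fst snd t10 t01 t20 t11 t02 t30 t21 t12 t03].

(* With q = (1, -2is): B(q,q) = (-4s^2 f02, -4s f11), Delta(2i omega) = (-f01 e2, 2 omega)
   and h11 = E11 (1, 2) with E11 = -2s^2 f02 / f01; the three summands are
   C(q,q,qbar), B(qbar,h20) and 2 B(q,h11). *)
Definition lyap_num (f01 f11 f02 f12 f03 s e2 w : R) : Cx :=
  let e20 := cdiv (-4 * s ^ 2 * f02, -4 * s * f11) (- f01 * e2, 2 * w) in
  let e11 := -2 * s ^ 2 * f02 / f01 in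
  cadd (4 * s ^ 2 * f12, -8 * s ^ 3 * f03)
    (cadd (cmul e20 (f11 * e2, 2 * s * (f11 + e2 * f02)))
          (cscal (2 * e11) (2 * f11, -2 * s * (f11 + 2 * f02)))).

Section LyapunovCoefficient.
Variables f01 f11 f02 f12 f03 t1 t2 w s e2 d1 d2 : R.
Let f := Taylor3 0 f01 0 f11 f02 0 0 f12 f03.
Hypothesis Hesum : esum t1 t2 (iw w) = (0, -2 * s).
Hypothesis Hesum2 : esum t1 t2 (cscal 2 (iw w)) = (e2, 0).
Hypothesis Hcharf' : charf' f t1 t2 (iw w) = (d1, d2).
Hypothesis Hf01 : f01 <> 0.

Lemma E20_hopf : E20 f t1 t2 w = cdiv (-4 * s ^ 2 * f02, -4 * s * f11) (- f01 * e2, 2 * w).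
Proof.
  unfold E20, qv, charf; rewrite Hesum, Hesum2.
  unfold f; f_equal; cx_simpl; f_equal; ring.
Qed.

Lemma E11_hopf : E11 f t1 t2 w = (-2 * s ^ 2 * f02 / f01, 0).
Proof.
  unfold E11, qv, qvb, charf; rewrite esum_cconj, Hesum, esum_0.
  unfold f; cx_simpl; f_equal; field; auto.
Qed.

Lemma lyap1_hopf :
  lyap1 f t1 t2 w = cscal (1 / 2) (cdiv (lyap_num f01 f11 f02 f12 f03 s e2 w) (d1, d2)).
Proof.
  unfold lyap1, h20, h11, qv, qvb.
  rewrite E11_hopf, E20_hopf, esum_cconj, Hesum, Hesum2, Hcharf'.
  do 2 f_equal.
  unfold lyap_num; destruct (cdiv (-4 * s ^ 2 * f02, _) _) as [xr xi].
  unfold f; cx_simpl; f_equal; ring.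
Qed.
Lemma mu2_hopf g kc :
  t10 g = 0 -> tscale kc g = f -> s <> 0 -> d2 <> 0 -> t01 g <> 0 ->
  let N := lyap_num f01 f11 f02 f12 f03 s e2 w in
  mu2 g kc t1 t2 w = (cre N * d1 + cim N * d2) / (4 * s * t01 g * d2).
Proof.
  intros H10 Hf Hs Hd2 Hg01 N.
  assert (d1 * d1 + d2 * d2 <> 0) by (intro; apply Hd2; nra).
  unfold mu2, alpha'; rewrite Hf, lyap1_hopf, Hcharf', Hesum, H10.
  fold N; destruct N as [nr ni].
  cx_simpl; field; auto.
Qed.
End LyapunovCoefficient.

Lemma lyap_num_quadratic f01 f11 s e2 w :
  w <> 0 ->
  lyap_num f01 f11 0 0 0 s e2 w
  = cscal (-4 * s * f11 ^ 2 / ((f01 * e2) ^ 2 + (2 * w) ^ 2))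
          (2 * w * e2 + 2 * s * f01 * e2, 4 * s * w - f01 * e2 ^ 2).
Proof.
  intros Hw.
  assert ((f01 * e2) ^ 2 + (2 * w) ^ 2 <> 0) by (intro; apply Hw; nra).
  assert (- f01 * e2 * (- f01 * e2) + 2 * w * (2 * w) <> 0) by (intro; apply Hw; nra).
  unfold lyap_num.
  replace (-2 * s ^ 2 * 0 / f01) with 0 by (unfold Rdiv; ring).
  cx_simpl; f_equal; field; auto.
Qed.

Lemma noqueue_bracket_pos th :
  0 < th < PI ->
  0 < (cos th ^ 2 - sin th ^ 2) * (sin th + (PI / 2 - th) * cos th)
      + (2 * sin th ^ 2 + (cos th ^ 2 - sin th ^ 2) ^ 2) * (PI / 2).
Proof.
  intros Hth; pose proof PI2_3_2.
  set (s := sin th); set (c := cos th); set (z := (PI / 2 - th) * c).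
  assert (Hs : 0 < s) by (apply sin_gt_0; lra).
  assert (Hsc : s ^ 2 + c ^ 2 = 1)
    by (pose proof (sin2_cos2 th) as Hpy; unfold Rsqr in Hpy; fold s c in Hpy; lra).
  assert (Hz0 : 0 <= z).
  { destruct (Rle_lt_dec th (PI / 2)).
    - assert (0 <= c) by (apply cos_ge_0; lra); unfold z; nra.
    - assert (c <= 0) by (apply cos_le_0; lra); unfold z; nra. }
  assert (Hz1 : z <= PI / 2) by (pose proof (COS_bound th) as Hc1; fold c in Hc1; unfold z; nra).
  replace (c ^ 2) with (1 - s ^ 2) by lra.
  assert (s <= 1) by nra.
  destruct (Rle_lt_dec 0 (1 - 2 * s ^ 2)) as [Hc | Hc].
  - assert (0 <= (1 - s ^ 2 - s ^ 2) * (s + z)) by nra.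
    assert (0 < 2 * s ^ 2 + (1 - s ^ 2 - s ^ 2) ^ 2) by nra.
    nra.
  - assert ((1 - s ^ 2 - s ^ 2) * (s + z) >= (1 - s ^ 2 - s ^ 2) * (1 + PI / 2)) by nra.
    assert (0 < 4 * s ^ 4 - 4 * s ^ 2 + 2) by nra.
    assert ((2 * s ^ 2 + (1 - s ^ 2 - s ^ 2) ^ 2) * (PI / 2)
            >= (2 * s ^ 2 + (1 - s ^ 2 - s ^ 2) ^ 2) * (3 / 2)) by nra.
    nra.
Qed.

Section NoQueueFeedback.
Variables C a gamma t1 t2 : R.
Hypotheses (HC : 0 < C) (Ha : 0 < a) (Hg : 0 < gamma) (Ht1 : 0 < t1) (Ht2 : 0 < t2).

Lemma g_noqueue_t10 : t10 (g_noqueue C a gamma t1 t2) = 0.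
Proof. unfold g_noqueue, rcp_taylor, Rstar_nq; cbn; field; repeat split; lra. Qed.

Lemma g_noqueue_t01 : t01 (g_noqueue C a gamma t1 t2) = - a / (t1 + t2).
Proof. unfold g_noqueue, rcp_taylor, Rstar_nq; cbn; field; repeat split; lra. Qed.

Lemma tscale_kappa_c_noqueue :
  let s := sin (t1 * omega_c t1 t2) in
  tscale (kappa_c (atilde_nq a t1 t2) t1 t2) (g_noqueue C a gamma t1 t2)
  = Taylor3 0 (- PI / (2 * (t1 + t2) * s)) 0 (- PI / (gamma * C * (t1 + t2) * s)) 0 0 0 0 0.
Proof.
  intros s.
  assert (0 < s) by (apply sin_gt_0; apply hopf_phase_bounds; auto).
  unfold kappa_c, atilde_nq; rewrite cos_kappa_c_phase by auto; fold s.
  unfold g_noqueue, rcp_taylor, Rstar_nq, tscale; cbn.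
  f_equal; field; repeat split; lra.
Qed.

Lemma mu2_noqueue_pos : 0 < mu2_noqueue C a gamma t1 t2.
Proof.
  pose proof PI_RGT_0.
  set (T := t1 + t2); set (w := omega_c t1 t2); set (th := t1 * w).
  set (s := sin th); set (c := cos th).
  assert (HT : 0 < T) by (unfold T; lra).
  assert (Hth : 0 < th < PI) by exact (hopf_phase_bounds t1 t2 Ht1 Ht2).
  assert (Hs : 0 < s) by (apply sin_gt_0; lra).
  set (f01 := - PI / (2 * T * s)); set (f11 := - PI / (gamma * C * T * s)).
  assert (Hf01 : f01 < 0).
  { assert (0 < PI / (2 * T * s)) by (apply Rdiv_lt_0_compat; nra).
    unfold f01, Rdiv in *; lra. }
  assert (Hd2 : - f01 * (t1 + t2) * s = PI / 2) by (unfold f01; fold T; field; split; lra).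
  unfold mu2_noqueue.
  rewrite (mu2_hopf f01 f11 0 0 0 t1 t2 w s (2 * (c ^ 2 - s ^ 2))
             (1 + f01 * (t1 - t2) * c) (- f01 * (t1 + t2) * s));
    [| exact (esum_hopf t1 t2 Ht1 Ht2) | exact (esum_hopf_double t1 t2 Ht1 Ht2)
     | exact (charf'_hopf t1 t2 Ht1 Ht2 _) | intro; lra | exact g_noqueue_t10
     | exact tscale_kappa_c_noqueue | intro; lra | rewrite Hd2; intro; lra
     | rewrite g_noqueue_t01; assert (0 < a / (t1 + t2)) by (apply Rdiv_lt_0_compat; lra);
       unfold Rdiv in *; intro; lra ].
  assert (Hw : 0 < w) by (apply Rdiv_lt_0_compat; lra).
  set (n := (f01 * (2 * (c ^ 2 - s ^ 2))) ^ 2 + (2 * w) ^ 2).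
  assert (Hn : 0 < n).
  { unfold n; pose proof (pow2_ge_0 (f01 * (2 * (c ^ 2 - s ^ 2)))).
    assert (0 < (2 * w) ^ 2) by (apply pow_lt; lra); lra. }
  rewrite lyap_num_quadratic, g_noqueue_t01 by lra; fold n; unfold cre, cim, cscal; cbn [fst snd].
  match goal with |- 0 < ?X =>
    replace X with (4 * f11 ^ 2 / (n * a * s) *
      ((c ^ 2 - s ^ 2) * (s + (PI / 2 - th) * c) + (2 * s ^ 2 + (c ^ 2 - s ^ 2) ^ 2) * (PI / 2)))
  end.
  2: { unfold f01, f11, th, w, omega_c, T; field; repeat split; lra. }
  apply Rmult_lt_0_compat; [| exact (noqueue_bracket_pos th Hth)].
  assert (Hf11 : f11 < 0).
  { assert (0 < PI / (gamma * C * T * s))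
      by (apply Rdiv_lt_0_compat; [lra | repeat apply Rmult_lt_0_compat; lra]).
    unfold f11, Rdiv in *; lra. }
  apply Rdiv_lt_0_compat; [nra | repeat apply Rmult_lt_0_compat; lra].
Qed.
End NoQueueFeedback.

(* b = 1/28 is chosen so that sqrt (b^2 + 8b) = 15/28 is rational. *)
Lemma Rstar_q_example C : Rstar_q C (1 / 28) = 7 * C / 16.
Proof.
  unfold Rstar_q.
  replace ((1 / 28) ^ 2 + 8 * (1 / 28)) with ((15 / 28) * (15 / 28)) by field.
  rewrite sqrt_square by lra; field.
Qed.

Lemma g_queue_example C :
  0 < C ->
  g_queue C 1 (1 / 28) 1 1
  = rcp_taylor (1 / C) (7 * C / 16) 0 (-15 / 7) (-128 / (7 * C)) (-3072 / (7 * C ^ 2)).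
Proof.
  intros HC; unfold g_queue, p_queue; rewrite Rstar_q_example.
  unfold rcp_taylor; f_equal; field; lra.
Qed.

Lemma kappa_c_queue_example C :
  0 < C -> kappa_c (atilde_q C 1 (1 / 28) 1 1) 1 1 = 4 * PI / 15.
Proof.
  intros HC; pose proof PI_RGT_0.
  unfold kappa_c, atilde_q; rewrite Rstar_q_example.
  replace (PI * (1 - 1) / (2 * (1 + 1))) with 0 by field.
  rewrite cos_0; field; lra.
Qed.

Lemma mu2_queue_example_neg C : 0 < C -> mu2_queue C 1 (1 / 28) 1 1 < 0.
Proof.
  intros HC; pose proof PI_RGT_0.
  assert (Ht : 0 < 1) by lra.
  assert (Hth : 1 * omega_c 1 1 = PI / 2) by (unfold omega_c; field).
  set (f01 := - PI / 4); set (f11 := -4 * PI / (7 * C)); set (f02 := -32 * PI / (15 * C)).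
  set (f12 := -512 * PI / (105 * C ^ 2)); set (f03 := -256 * PI / (5 * C ^ 2)).
  assert (Hf : tscale (kappa_c (atilde_q C 1 (1 / 28) 1 1) 1 1) (g_queue C 1 (1 / 28) 1 1)
               = Taylor3 0 f01 0 f11 f02 0 0 f12 f03).
  { rewrite kappa_c_queue_example, g_queue_example by lra.
    unfold tscale, rcp_taylor, f01, f11, f02, f12, f03; cbn; f_equal; field; lra. }
  assert (Hg01 : t01 (g_queue C 1 (1 / 28) 1 1) = -15 / 16)
    by (rewrite g_queue_example by lra; cbn; field; lra).
  unfold mu2_queue.
  rewrite (mu2_hopf f01 f11 f02 f12 f03 1 1 (omega_c 1 1) (sin (1 * omega_c 1 1))
             (2 * (cos (1 * omega_c 1 1) ^ 2 - sin (1 * omega_c 1 1) ^ 2))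
             (1 + f01 * (1 - 1) * cos (1 * omega_c 1 1)) (- f01 * (1 + 1) * sin (1 * omega_c 1 1)));
    [| exact (esum_hopf 1 1 Ht Ht) | exact (esum_hopf_double 1 1 Ht Ht)
     | exact (charf'_hopf 1 1 Ht Ht _) | unfold f01; intro; lra
     | rewrite g_queue_example by lra; cbn; ring | exact Hf
     | rewrite Hth, sin_PI2; intro; lra | rewrite Hth, sin_PI2; unfold f01; intro; lra
     | rewrite Hg01; intro; lra ].
  rewrite Hth, sin_PI2, cos_PI2, Hg01.
  unfold lyap_num; cx_simpl.
  match goal with |- ?X < 0 =>
    replace X with (- (8 / (15 * C ^ 2)) * (4129024 / 55125 + 1619584 / 55125 * PI))
  end.
  2: { unfold f01, f11, f02, f12, f03, omega_c; field; repeat split; intro; nra. }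
  assert (0 < 8 / (15 * C ^ 2))
    by (apply Rdiv_lt_0_compat; [lra | pose proof (pow_lt C 2 HC); lra]).
  nra.
Qed.

Theorem mainTheorem8 :
  (* (i) the sign of mu2 (criticality) does not depend on a *)
  (forall C a a' b tau1 tau2 : R,
      0 < C -> 0 < a -> 0 < a' -> 0 < b -> 0 < tau1 -> 0 < tau2 ->
      (0 < mu2_queue C a b tau1 tau2 <-> 0 < mu2_queue C a' b tau1 tau2) /\
      (mu2_queue C a b tau1 tau2 < 0 <-> mu2_queue C a' b tau1 tau2 < 0)) /\
  (* (ii) sub-critical Hopf bifurcations occur for some b, tau1, tau2 *)
  (exists b tau1 tau2 : R, 0 < b /\ 0 < tau1 /\ 0 < tau2 /\
      forall C a : R, 0 < C -> 0 < a -> mu2_queue C a b tau1 tau2 < 0) /\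
  (* (iii) without queue feedback the bifurcation is always super-critical *)
  (forall C a gamma tau1 tau2 : R,
      0 < C -> 0 < a -> 0 < gamma -> gamma <= 1 -> 0 < tau1 -> 0 < tau2 ->
      0 < mu2_noqueue C a gamma tau1 tau2).
Proof.
  split; [| split].
  - intros C a a' b t1 t2 _ Ha Ha' _ _ _.
    rewrite (mu2_queue_scale C a), (mu2_queue_scale C a') by lra.
    destruct (Rdiv_pos_sign (mu2_queue C 1 b t1 t2) a Ha) as [-> ->].
    destruct (Rdiv_pos_sign (mu2_queue C 1 b t1 t2) a' Ha') as [-> ->].
    tauto.
  - exists (1 / 28), 1, 1; repeat split; try lra.
    intros C a HC Ha.
    rewrite mu2_queue_scale by lra.
    apply (Rdiv_pos_sign _ a Ha), mu2_queue_example_neg, HC.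
  - intros C a gamma t1 t2 HC Ha Hg _ Ht1 Ht2.
    exact (mu2_noqueue_pos C a gamma t1 t2 HC Ha Hg Ht1 Ht2).
Qed.
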